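(* For every finite simple graph $G=(V,E)$, $$\omega(\overline{X}_G)(x_1,x_2,\dots)=\sum_{W\subseteq V}(-1)^{|V\setminus W|}\prod_{i\ge1}H_{G|_W}(x_i),$$ where $H_{G|_W}(t)=1/I_{G|_W}(-t)$.
   Context: $\overline{X}_G=\sum_\kappa\prod_{v}\prod_{i\in\kappa(v)}x_i$ over proper set colorings $\kappa$ (maps $V\to$ nonempty subsets of $\mathbb{Z}_{>0}$, adjacent vertices get disjoint sets). $I_H(t)=\sum_n a_nt^n$ is the independence polynomial ($a_n$ = number of independent sets of size $n$); $H_G(t)=\sum_{n\ge0}|\mathcal{H}_G(n)|t^n$ is the generating series of heaps of $G$ by size (a heap being an equivalence class of words over $V$ under swapping adjacent nonadjacent-in-$G$ distinct letters), which equals $1/I_G(-t)$. $\omega$ is the standard involution on symmetric functions ($\omega(p_\lambda)=(-1)^{|\lambda|-\ell(\lambda)}p_\lambda$), extended degree-wise. $G|_W$ is the induced subgraph. *)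

From HB Require Import structures.
From mathcomp Require Import all_boot all_order all_algebra.
From mathcomp Require Import mpoly.
Set Implicit Arguments. Unset Strict Implicit. Unset Printing Implicit Defensive.
Import Order.TTheory GRing.Theory.
Local Open Scope ring_scope.

Definition simple_graph (T : finType) (e : rel T) : Prop :=
  ssrbool.symmetric e /\ irreflexive e.

Definition independent (T : finType) (e : rel T) (S : {set T}) : bool :=
  [forall u in S, forall v in S, ~~ e u v].

(* a_k(G|_W) : number of independent sets of size k of the induced subgraph
   G|_W (independent sets of G|_W are exactly the independent sets of G
   contained in W). *)
Definition indep_count (T : finType) (e : rel T) (W : {set T}) (k : nat) : nat :=
  #|[set S : {set T} | (S \subset W) && independent e S && (#|S| == k)]|.

Definition indep_poly (T : finType) (e : rel T) (W : {set T}) : {poly rat} :=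
  \sum_(k < #|T|.+1) (indep_count e W k)%:R *: 'X^k.

Definition indep_poly_neg (T : finType) (e : rel T) (W : {set T}) : {poly rat} :=
  \sum_(k < #|T|.+1) ((-1) ^+ k * (indep_count e W k)%:R) *: 'X^k.

(* Coefficient of t^m in the formal power series H_{G|_W}(t) = 1/I_{G|_W}(-t).
   Since I(-t) = 1 - u(t) with u(0) = 0, 1/I(-t) = sum_j u(t)^j and the terms
   with j > m do not contribute to the coefficient of t^m. *)
Definition H_coef (T : finType) (e : rel T) (W : {set T}) (m : nat) : rat :=
  (\sum_(j < m.+1) (1 - indep_poly_neg e W) ^+ j)`_m.

Definition hcomp (n : nat) (d : nat) (p : {mpoly rat[n]}) : {mpoly rat[n]} :=
  \sum_(m <- msupp p | mdeg m == d) p@_m *: 'X_[m].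

(* Degree-d part of  X̄_G(x_1,...,x_n,0,0,...): sum over proper set colourings
   kappa : V -> nonempty subsets of {1..n}, adjacent vertices receiving
   disjoint sets, with sum_v |kappa(v)| = d, of prod_v prod_{i in kappa v} x_i. *)
Definition proper_set_coloring (T : finType) (e : rel T) (n : nat)
  (k : {ffun T -> {set 'I_n}}) : bool :=
  [forall v, k v != set0] && [forall u, forall v, e u v ==> [disjoint k u & k v]].

Definition Xbar_deg (T : finType) (e : rel T) (n d : nat) : {mpoly rat[n]} :=
  \sum_(k : {ffun T -> {set 'I_n}} |
          proper_set_coloring e k && ((\sum_v #|k v|)%N == d))
     \prod_v \prod_(i in k v) 'X_i.

Definition RHS_deg (T : finType) (e : rel T) (n d : nat) : {mpoly rat[n]} :=
  hcomp d (\sum_(W : {set T}) (-1) ^+ #|~: W| *: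
      \prod_(i < n) \sum_(m < d.+1) H_coef e W m *: ('X_i ^+ m)).

Definition psum (n k : nat) : {mpoly rat[n]} := \sum_(i < n) 'X_i ^+ k.
Definition psum_part (n : nat) (la : seq nat) : {mpoly rat[n]} :=
  \prod_(k <- la) psum n k.

Definition is_part_of (d : nat) (la : seq nat) : bool :=
  [&& sorted geq la, all (fun k => 0 < k)%N la & sumn la == d].

(* omega_rel n d f g : g = omega(f) for homogeneous symmetric functions of
   degree d, viewed in n >= d variables (where Lambda^d -> Lambda^d_n is an
   isomorphism and the p_la, la |- d, are linearly independent):
   f = sum_la c_la p_la  and  g = sum_la (-1)^{d - l(la)} c_la p_la. *)
Definition omega_rel (n d : nat) (f g : {mpoly rat[n]}) : Prop :=
  exists (s : seq (seq nat)) (c : seq nat -> rat),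
    [/\ all (is_part_of d) s,
        f = \sum_(la <- s) c la *: psum_part n la &
        g = \sum_(la <- s) ((-1) ^+ (d - size la) * c la) *: psum_part n la].
Arguments omega_rel n d f g : clear implicits.

From mathcomp Require Import all_boot all_order all_algebra.
From mathcomp Require Import mpoly.
From mathcomp Require Import ring zify.
Set Implicit Arguments. Unset Strict Implicit. Unset Printing Implicit Defensive.
Import GRing.Theory Num.Theory.
Local Open Scope ring_scope.

(* If [f(t) = 1 + ...] has logarithmic derivative [t f'/f = sum_k q_k t^k],
   then [prod_i f(x_i t)] has logarithmic derivative [sum_k q_k p_k t^k], and
   Newton's recursion [j F_j = sum_k q_k p_k F_(j-k)] writes each coefficient
   [F_j] in power sums.  For [f = I_{G|_W}] the series
   [H_{G|_W}(t) = 1/I_{G|_W}(-t)] has logarithmic derivative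
   [sum_k (-1)^(k-1) q_k t^k], so [omega], which multiplies [p_k] by
   [(-1)^(k-1)], exchanges the two recursions:
   [omega (prod_i I_{G|_W}(x_i)) = prod_i H_{G|_W}(x_i)] degree by degree.
   On the other hand, the colour classes of a set colouring of [G|_W] in which
   vertices may receive the empty set are independent sets, so
   [prod_i I_{G|_W}(x_i)] is the generating function of these colourings, and
   inclusion-exclusion over the set [W] of vertices allowed a nonempty set of
   colours gives [X_G = sum_W (-1)^|V \ W| prod_i I_{G|_W}(x_i)]. *)

(* Power series are represented by polynomials that are only compared up to
   a degree d. *)
Section TruncatedSeries.
Variable R : comNzRingType.
Implicit Types (f g p q Q : {poly R}) (d : nat).

Definition vanishes_upto d p := forall j, (j <= d)%N -> p`_j = 0.

Lemma vanishes_uptoD d p q :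
  vanishes_upto d p -> vanishes_upto d q -> vanishes_upto d (p + q).
Proof. by move=> hp hq j jd; rewrite coefD hp ?hq ?addr0. Qed.

Lemma vanishes_uptoN d p : vanishes_upto d p -> vanishes_upto d (- p).
Proof. by move=> hp j jd; rewrite coefN hp ?oppr0. Qed.

Lemma vanishes_upto_mull d p q : vanishes_upto d p -> vanishes_upto d (q * p).
Proof.
move=> hp j jd; rewrite coefM big1 // => i _.
by rewrite hp ?mulr0 // (leq_trans (leq_subr _ _)).
Qed.

Lemma vanishes_upto_mulr d p q : vanishes_upto d p -> vanishes_upto d (p * q).
Proof. by rewrite mulrC; apply: vanishes_upto_mull. Qed.

Lemma vanishes_upto_Xderiv d p : vanishes_upto d p -> vanishes_upto d ('X * p^`()).
Proof. by move=> hp [|j] jd; rewrite coefXM //= coef_deriv hp ?mul0rn. Qed.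

(* [Q] is the logarithmic derivative [t f'(t) / f(t)] of [f] up to degree [d];
   stated without division, so that [f] need not be invertible. *)
Definition logder_upto d f Q := vanishes_upto d ('X * f^`() - Q * f).

Lemma logder_upto1 d : logder_upto d 1 0.
Proof. by move=> j _; rewrite derivC mulr0 mul0r subr0 coef0. Qed.

Lemma logder_uptoM d f g Q Q' :
  logder_upto d f Q -> logder_upto d g Q' -> logder_upto d (f * g) (Q + Q').
Proof.
move=> hf hg; rewrite /logder_upto.
have -> : 'X * (f * g)^`() - (Q + Q') * (f * g) =
          g * ('X * f^`() - Q * f) + f * ('X * g^`() - Q' * g).
  by rewrite derivM; ring.
by apply: vanishes_uptoD; apply: vanishes_upto_mull.
Qed.

Lemma logder_upto_prod (I : Type) (r : seq I) (P : pred I) (F G : I -> {poly R}) d :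
  (forall i, P i -> logder_upto d (F i) (G i)) ->
  logder_upto d (\prod_(i <- r | P i) F i) (\sum_(i <- r | P i) G i).
Proof.
move=> hFG; apply: (big_ind2 (fun f Q => logder_upto d f Q)) => //.
- exact: logder_upto1.
- by move=> ? ? ? ?; apply: logder_uptoM.
Qed.

Lemma logder_uptoP d f Q : logder_upto d f Q <->
  forall j, (j <= d)%N -> f`_j *+ j = \sum_(k < j.+1) Q`_k * f`_(j - k).
Proof.
have coefE j :
    ('X * f^`() - Q * f)`_j = f`_j *+ j - \sum_(k < j.+1) Q`_k * f`_(j - k).
  rewrite coefB coefXM coefM; case: j => [|j]; last by rewrite coef_deriv.
  by rewrite eqxx mulr0n big_ord1 sub0r.
split=> hfQ j jd; first by apply/eqP; rewrite -subr_eq0 -coefE hfQ.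
by rewrite coefE hfQ // subrr.
Qed.

Lemma logder_upto_dilate d f Q g Q' (x : R) :
  logder_upto d f Q ->
  (forall j, (j <= d)%N -> g`_j = f`_j * x ^+ j) ->
  (forall j, (j <= d)%N -> Q'`_j = Q`_j * x ^+ j) ->
  logder_upto d g Q'.
Proof.
move=> /logder_uptoP hfQ hg hQ'; apply/logder_uptoP => j jd.
rewrite hg // -mulrnAl hfQ // mulr_suml; apply: eq_bigr => -[k /= kj] _.
have kd : (k <= d)%N by rewrite (leq_trans _ jd) // -ltnS.
rewrite hQ' // hg ?(leq_trans (leq_subr _ _)) //.
by rewrite mulrACA -exprD subnKC // -ltnS.
Qed.

(* With [g = 1/f]: [t f'/f = t f' g] and [log g = - log f]. *)
Lemma logder_upto_inv d f g : vanishes_upto d (1 - f * g) ->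
  logder_upto d f ('X * f^`() * g) /\ logder_upto d g (- ('X * f^`() * g)).
Proof.
move=> fg1.
have logf : logder_upto d f ('X * f^`() * g).
  rewrite /logder_upto.
  have -> : 'X * f^`() - 'X * f^`() * g * f = ('X * f^`()) * (1 - f * g) by ring.
  exact: vanishes_upto_mull.
split=> //; rewrite /logder_upto; set Z := 'X * g^`() - - ('X * f^`() * g) * g.
have fZ : vanishes_upto d (f * Z).
  have -> : f * Z = - ('X * (1 - f * g)^`())
                    - ('X * f^`() - 'X * f^`() * g * f) * g.
    by rewrite /Z derivB derivC derivM; ring.
  apply: vanishes_uptoD; apply: vanishes_uptoN; first exact: vanishes_upto_Xderiv.
  exact: vanishes_upto_mulr.
have -> : Z = g * (f * Z) + (1 - f * g) * Z by ring.
by apply: vanishes_uptoD; [apply: vanishes_upto_mull | apply: vanishes_upto_mulr].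
Qed.

(* [1 / f = sum_j (1 - f)^j] truncated at degree [d]; the coefficient of [t^m]
   only involves the terms [j <= m] once [f] has constant term [1]. *)
Definition trunc_inv d f : {poly R} :=
  \poly_(m < d.+1) (\sum_(j < m.+1) (1 - f) ^+ j)`_m.

Lemma trunc_invP d f : f`_0 = 1 -> vanishes_upto d (1 - f * trunc_inv d f).
Proof.
move=> f0; set u := 1 - f.
have u0 : u`_0 = 0 by rewrite coefB coef1 f0 subrr.
have uX j m : (m < j)%N -> (u ^+ j)`_m = 0.
  elim: j m => // j IH m mj; rewrite exprS coefM big1 // => -[[|i] /= ilt] _.
    by rewrite u0 mul0r.
  by rewrite IH ?mulr0 //; lia.
have invE m : (m <= d)%N -> (trunc_inv d f)`_m = (\sum_(j < d.+1) u ^+ j)`_m.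
  move=> md; rewrite coef_poly ltnS md !coef_sum.
  rewrite (big_ord_widen d.+1 (fun j => (u ^+ j)`_m)) //.
  rewrite [RHS](bigID (fun j : 'I_d.+1 => (j < m.+1)%N)) /=.
  by rewrite [X in _ = _ + X]big1 ?addr0 // => j; rewrite -leqNgt; apply: uX.
move=> m md; rewrite coefB.
have -> : (f * trunc_inv d f)`_m = (f * \sum_(j < d.+1) u ^+ j)`_m.
  by rewrite !coefM; apply: eq_bigr => -[i /= il] _; rewrite invE //; lia.
have -> : f * \sum_(j < d.+1) u ^+ j = 1 - u ^+ d.+1.
  by rewrite -[1 - u ^+ _]opprB subrX1 /u; ring.
by rewrite coefB uX // subr0 subrr.
Qed.

End TruncatedSeries.

Lemma logder_upto_map (R S : comNzRingType) (phi : {rmorphism R -> S})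
    (f Q : {poly R}) d :
  logder_upto d f Q -> logder_upto d (map_poly phi f) (map_poly phi Q).
Proof.
move=> /logder_uptoP hfQ; apply/logder_uptoP => j jd.
rewrite !coef_map -rmorphMn hfQ // rmorph_sum; apply: eq_bigr => k _.
by rewrite rmorphM !coef_map.
Qed.

Lemma size_le_sumn (s : seq nat) : all (fun k => 0 < k)%N s -> (size s <= sumn s)%N.
Proof.
elim: s => //= k s IH /andP[k0 /IH]; rewrite -addn1 addnC => hs.
exact: leq_add.
Qed.

Section OmegaPairs.
Variable n : nat.
Local Notation MP := {mpoly rat[n]}.

Lemma psum_part_cat (la mu : seq nat) :
  psum_part n (la ++ mu) = psum_part n la * psum_part n mu.
Proof. by rewrite /psum_part big_cat. Qed.

Lemma psum_part_sort (la : seq nat) : psum_part n (sort geq la) = psum_part n la.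
Proof. by apply: perm_big; apply: permEl; apply: perm_sort. Qed.

(* [omega_rel] with the coefficient attached to each occurrence of a
   partition, so that partitions may repeat. *)
Definition omega_pair d (f g : MP) :=
  exists r : seq (rat * seq nat), [/\ all (fun x => is_part_of d x.2) r,
    f = \sum_(x <- r) x.1 *: psum_part n x.2 &
    g = \sum_(x <- r) ((-1) ^+ (d - size x.2) * x.1) *: psum_part n x.2].

Lemma omega_pair0 d : omega_pair d 0 0.
Proof. by exists [::]; rewrite !big_nil. Qed.

Lemma omega_pairD d f g f' g' :
  omega_pair d f g -> omega_pair d f' g' -> omega_pair d (f + f') (g + g').
Proof.
move=> [r [r_part -> ->]] [r' [r'_part -> ->]]; exists (r ++ r').
by rewrite !big_cat all_cat r_part r'_part.
Qed.

Lemma omega_pairZ d c f g : omega_pair d f g -> omega_pair d (c *: f) (c *: g).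
Proof.
move=> [r [r_part -> ->]]; exists [seq (c * x.1, x.2) | x <- r]; split.
- by rewrite all_map.
- by rewrite big_map scaler_sumr; apply: eq_bigr => x _; rewrite scalerA.
- by rewrite big_map scaler_sumr; apply: eq_bigr => x _; rewrite scalerA mulrCA.
Qed.

Lemma omega_pair_sum d (I : Type) (r : seq I) (P : pred I) (F G : I -> MP) :
  (forall i, P i -> omega_pair d (F i) (G i)) ->
  omega_pair d (\sum_(i <- r | P i) F i) (\sum_(i <- r | P i) G i).
Proof.
by move=> hFG; apply: (big_ind2 (omega_pair d)) => //;
  [exact: omega_pair0 | exact: omega_pairD].
Qed.

Lemma omega_pairM d1 d2 f g f' g' : omega_pair d1 f g -> omega_pair d2 f' g' ->
  omega_pair (d1 + d2) (f * f') (g * g').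
Proof.
move=> [r [r_part -> ->]] [r' [r'_part -> ->]].
exists [seq (x.1 * y.1, sort geq (x.2 ++ y.2)) | x <- r, y <- r']; split.
- apply/allP => z /allpairsP [[x y] [/= xr yr ->]] /=.
  have /and3P[_ x_pos /eqP x_sum] := allP r_part x xr.
  have /and3P[_ y_pos /eqP y_sum] := allP r'_part y yr.
  apply/and3P; split.
  + by apply: sort_sorted => a b; rewrite /geq leq_total.
  + by rewrite all_sort all_cat x_pos y_pos.
  + by rewrite (perm_sumn (permEl (perm_sort _ _))) sumn_cat x_sum y_sum.
- rewrite big_allpairs_dep big_distrlr; apply: eq_bigr => x _; apply: eq_bigr => y _.
  by rewrite /= psum_part_sort psum_part_cat -scalerAl -scalerAr scalerA.
rewrite big_allpairs_dep big_distrlr /= !big_seq; apply: eq_bigr => x xr.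
rewrite !big_seq; apply: eq_bigr => y yr.
have /and3P[_ /size_le_sumn x_size /eqP x_sum] := allP r_part x xr.
have /and3P[_ /size_le_sumn y_size /eqP y_sum] := allP r'_part y yr.
rewrite /= psum_part_sort psum_part_cat -scalerAl -scalerAr scalerA size_sort size_cat.
have -> : (d1 + d2 - (size x.2 + size y.2) = (d1 - size x.2) + (d2 - size y.2))%N.
  rewrite x_sum in x_size; rewrite y_sum in y_size.
  by move: (size x.2) (size y.2) x_size y_size => a b; lia.
by rewrite exprD; congr (_ *: _); ring.
Qed.

Lemma omega_pair1 : omega_pair 0 1 1.
Proof.
by exists [:: (1, [::])]; rewrite !big_seq1 /psum_part big_nil /= mul1r scale1r.
Qed.

Lemma omega_pair_psum k (c : rat) : (0 < k)%N ->
  omega_pair k (c *: psum n k) (((-1) ^+ k.+1 * c) *: psum n k).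
Proof.
case: k => // k _; exists [:: (c, [:: k.+1])]; split.
- by rewrite /= /is_part_of /= addn0 eqxx.
- by rewrite big_seq1 /psum_part big_seq1.
by rewrite big_seq1 /psum_part big_seq1 /= subn1 /= !exprS mulrA mulrNN !mul1r.
Qed.

Lemma sum_group_by_snd (r : seq (rat * seq nat)) (w : seq nat -> rat)
    (h : seq nat -> MP) :
  \sum_(x <- r) (w x.2 * x.1) *: h x.2 =
  \sum_(la <- undup (map snd r)) (w la * \sum_(x <- r | x.2 == la) x.1) *: h la.
Proof.
symmetry; transitivity (\sum_(la <- undup (map snd r)) \sum_(x <- r)
    (if x.2 == la then (w x.2 * x.1) *: h x.2 else 0)).
  apply: eq_bigr => la _; rewrite mulr_sumr scaler_suml big_mkcond.
  by apply: eq_bigr => x _; case: eqP => // ->.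
rewrite exchange_big !big_seq; apply: eq_bigr => x xr.
have x_snd : x.2 \in undup (map snd r) by rewrite mem_undup map_f.
rewrite (big_rem _ x_snd) eqxx big_seq big1 ?Monoid.mulm1 // => la.
by rewrite mem_rem_uniq ?undup_uniq // inE eq_sym => /andP[/negbTE ->].
Qed.

Lemma omega_pair_rel d f g : omega_pair d f g -> omega_rel n d f g.
Proof.
move=> [r [r_part -> ->]].
exists (undup (map snd r)), (fun la => \sum_(x <- r | x.2 == la) x.1); split.
- by apply/allP => la; rewrite mem_undup => /mapP [x xr ->]; apply: (allP r_part).
- have := sum_group_by_snd r (fun _ => 1) (psum_part n).
  by under eq_bigr do rewrite mul1r; under [X in _ = X -> _]eq_bigr do rewrite mul1r.
- exact: sum_group_by_snd r (fun la => (-1) ^+ (d - size la)) (psum_part n).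
Qed.

(* The heart of the argument: since [omega] multiplies [p_k] by [(-1)^(k-1)],
   it transforms Newton's recursion for [P] into the one for [P']. *)
Lemma omega_pair_logder (P P' Q Q' : {poly MP}) (q : nat -> rat) d :
  P`_0 = 1 -> P'`_0 = 1 -> logder_upto d P Q -> logder_upto d P' Q' ->
  Q`_0 = 0 -> Q'`_0 = 0 ->
  (forall k, (0 < k <= d)%N -> Q`_k = q k *: psum n k) ->
  (forall k, (0 < k <= d)%N -> Q'`_k = ((-1) ^+ k.+1 * q k) *: psum n k) ->
  forall j, (j <= d)%N -> omega_pair j P`_j P'`_j.
Proof.
move=> P0 P'0 /logder_uptoP hP /logder_uptoP hP' Q0 Q'0 hQ hQ'.
elim/ltn_ind=> -[_ _|j IH jd]; first by rewrite P0 P'0; exact: omega_pair1.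
have unmul (p s : MP) : p *+ j.+1 = s -> p = (j.+1%:R)^-1 *: s.
  by move=> <-; rewrite -scaler_nat scalerA mulVf ?pnatr_eq0 // scale1r.
rewrite (unmul _ _ (hP _ jd)) (unmul _ _ (hP' _ jd)).
apply: omega_pairZ; apply: omega_pair_sum => -[[|k] /= kj] _.
  by rewrite Q0 Q'0 !mul0r; exact: omega_pair0.
have kd : (0 < k.+1 <= d)%N by rewrite /= (leq_trans _ jd) // -ltnS.
rewrite hQ // hQ' //.
have jk : (j.+1 - k.+1 < j.+1)%N by rewrite subSS ltnS leq_subr.
have := omega_pairM (omega_pair_psum (q k.+1) (ltn0Sn k))
  (IH _ jk (leq_trans (leq_subr _ _) jd)).
by rewrite subnKC // -ltnS.
Qed.

End OmegaPairs.

Section IndependencePolynomial.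
Variables (T : finType) (e : rel T) (W : {set T}).

Lemma independent_set0 : independent e set0.
Proof. by apply/forall_inP => u; rewrite inE. Qed.

Lemma indep_count0 : indep_count e W 0 = 1%N.
Proof.
rewrite /indep_count -(cards1 (set0 : {set T})); apply: eq_card => S.
rewrite !inE cards_eq0; case: eqP => [->|_]; last by rewrite andbF.
by rewrite sub0set independent_set0.
Qed.

Lemma indep_count_eq0 m : (#|T| < m)%N -> indep_count e W m = 0%N.
Proof.
move=> Tm; apply: eq_card0 => S; rewrite !inE.
by apply/negP => /andP[_ /eqP cardS]; move: (max_card S); rewrite cardS leqNgt Tm.
Qed.

Lemma coef_indep_poly m : (indep_poly e W)`_m = (indep_count e W m)%:R.
Proof.
rewrite /indep_poly -(poly_def _ (fun k => (indep_count e W k)%:R)) coef_poly.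
by case: ltnP => // Tm; rewrite indep_count_eq0.
Qed.

Lemma coef_indep_poly_neg m :
  (indep_poly_neg e W)`_m = (-1) ^+ m * (indep_count e W m)%:R.
Proof.
rewrite /indep_poly_neg.
rewrite -(poly_def _ (fun k => (-1) ^+ k * (indep_count e W k)%:R)) coef_poly.
by case: ltnP => // Tm; rewrite indep_count_eq0 // mulr0.
Qed.

Variable d : nat.
Local Notation J := (indep_poly_neg e W).

Lemma coef_trunc_inv_indep m : (m <= d)%N -> (trunc_inv d J)`_m = H_coef e W m.
Proof. by move=> md; rewrite coef_poly ltnS md. Qed.

Lemma indep_trunc_inv :
  logder_upto d J ('X * J^`() * trunc_inv d J) /\
  logder_upto d (trunc_inv d J) (- ('X * J^`() * trunc_inv d J)).
Proof.
apply/logder_upto_inv/trunc_invP.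
by rewrite coef_indep_poly_neg indep_count0 mulr1.
Qed.

(* Coefficients of the logarithmic derivative of [I(t) = J(-t)]. *)
Definition indep_logder (k : nat) : rat :=
  (-1) ^+ k * ('X * J^`() * trunc_inv d J)`_k.

Lemma indep_logder0 : indep_logder 0 = 0.
Proof. by rewrite /indep_logder -mulrA coefXM mulr0. Qed.

Lemma logder_indep_poly :
  logder_upto d (indep_poly e W) (\poly_(k < d.+1) indep_logder k).
Proof.
have sign2 k : (-1) ^+ k * (-1) ^+ k = 1 :> rat by rewrite -exprMn mulrNN mulr1 expr1n.
apply: (logder_upto_dilate (proj1 indep_trunc_inv) (x := -1)) => j jd.
  by rewrite coef_indep_poly coef_indep_poly_neg mulrC mulrA sign2 mul1r.
by rewrite coef_poly ltnS jd mulrC.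
Qed.

End IndependencePolynomial.

Section Grading.
Variable n : nat.
Local Notation MP := {mpoly rat[n]}.

(* The substitution [x_i := x_i t]: the coefficient of [t^d] is the
   homogeneous component of degree [d]. *)
Definition grade : MP -> {poly MP} :=
  mmap (polyC \o mpolyC n (R := rat)) (fun i => ('X_i : MP)%:P * 'X).

Lemma grade_monomial (m : 'X_{1..n}) :
  mmap1 (fun i => ('X_i : MP)%:P * 'X) m = ('X_[m])%:P * 'X^(mdeg m).
Proof.
rewrite /mmap1; under eq_bigr do rewrite exprMn -rmorphXn.
by rewrite big_split /= prodrXr -rmorph_prod -mpolyXE_id mdegE.
Qed.

Lemma hcompE d (p : MP) : hcomp d p = (grade p)`_d.
Proof.
rewrite /grade /mmap /hcomp coef_sum big_mkcond /=; apply: eq_bigr => m _.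
rewrite grade_monomial mulrA -rmorphM coefMXn mul_mpolyC.
case: eqP => [<-|md]; first by rewrite ltnn subnn coefC.
by case: ltnP => // dm; rewrite coefC; case: eqP => // dm0; exfalso; lia.
Qed.

End Grading.

Section GradedIndependence.
Variables (T : finType) (e : rel T) (W : {set T}) (n d : nat).
Local Notation MP := {mpoly rat[n]}.

Definition indep_poly_at (i : 'I_n) : {poly MP} :=
  \sum_(S : {set T} | (S \subset W) && independent e S) ('X_i ^+ #|S|)%:P * 'X^#|S|.

Definition H_at (i : 'I_n) : MP := \sum_(m < d.+1) H_coef e W m *: 'X_i ^+ m.

Lemma coef_indep_poly_at i m :
  (indep_poly_at i)`_m = (indep_count e W m)%:R *: 'X_i ^+ m.
Proof.
rewrite /indep_poly_at coef_sum; under eq_bigr do rewrite coefCM coefXn.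
rewrite (bigID (fun S : {set T} => #|S| == m)) /= [X in _ + X]big1; last first.
  by move=> S /andP[_ /negbTE]; rewrite eq_sym => ->; rewrite mulr0.
rewrite addr0 (eq_bigr (fun _ => 'X_i ^+ m)); last first.
  by move=> S /andP[_ /eqP ->]; rewrite eqxx mulr1.
rewrite sumr_const scaler_nat; congr (_ *+ _).
by apply: eq_card => S; rewrite !inE.
Qed.

Lemma coef_grade_H_at i m :
  (m <= d)%N -> (grade (H_at i))`_m = H_coef e W m *: 'X_i ^+ m.
Proof.
move=> md; have gradeE : grade (H_at i) =
    \sum_(k < d.+1) (H_coef e W k *: 'X_i ^+ k)%:P * 'X^k.
  rewrite /grade (big_morph _ (mmapD _ _) (mmap0 _ _)); apply: eq_bigr => k _.
  rewrite mmapZ (rmorphXn (mmap _ _)) /= mmapX mmap1U exprMn mulrA.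
  by rewrite -rmorphXn -rmorphM mul_mpolyC.
rewrite gradeE coef_sum (bigD1 (Ordinal (_ : m < d.+1)%N)) //= coefCM coefXn.
rewrite eqxx mulr1 big1 ?addr0 // => k /eqP km; rewrite coefCM coefXn.
by case: eqP => [mk|]; [case: km; apply: val_inj | rewrite mulr0].
Qed.

Lemma logder_indep_poly_at i : logder_upto d (indep_poly_at i)
  (\poly_(k < d.+1) (indep_logder e W d k *: 'X_i ^+ k)).
Proof.
have logI := logder_upto_map (mpolyC n (R := rat)) (@logder_indep_poly _ e W d).
apply: (logder_upto_dilate logI (x := 'X_i)) => j jd.
  by rewrite coef_indep_poly_at coef_map coef_indep_poly mul_mpolyC.
by rewrite coef_map /= !coef_poly ltnS jd mul_mpolyC.
Qed.

Lemma logder_grade_H_at i : logder_upto d (grade (H_at i))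
  (\poly_(k < d.+1) (((-1) ^+ k.+1 * indep_logder e W d k) *: 'X_i ^+ k)).
Proof.
have logH := logder_upto_map (mpolyC n (R := rat)) (proj2 (indep_trunc_inv e W d)).
apply: (logder_upto_dilate logH (x := 'X_i)) => j jd.
  by rewrite coef_grade_H_at // coef_map coef_trunc_inv_indep // mul_mpolyC.
rewrite coef_poly ltnS jd coef_map /= mul_mpolyC coefN /indep_logder.
by rewrite mulrA -exprD addSn exprS exprD -exprMn mulrNN mulr1 expr1n mulr1 mulN1r.
Qed.

Lemma omega_pair_indep_H : omega_pair d
  (\prod_(i < n) indep_poly_at i)`_d (\prod_(i < n) grade (H_at i))`_d.
Proof.
have psumE c k : \sum_(i < n) (c *: 'X_i ^+ k) = c *: psum n k.
  by rewrite /psum scaler_sumr.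
apply: (omega_pair_logder _ _ (logder_upto_prod _ (fun i _ => logder_indep_poly_at i))
  (logder_upto_prod _ (fun i _ => logder_grade_H_at i))) => //.
- rewrite coef0_prod big1 // => i _.
  by rewrite coef_indep_poly_at indep_count0 scale1r expr0.
- rewrite coef0_prod big1 // => i _.
  by rewrite coef_grade_H_at // /H_coef big_ord1 !expr0 coef1 scale1r.
- by rewrite coef_sum big1 // => i _; rewrite coef_poly indep_logder0 scale0r.
- by rewrite coef_sum big1 // => i _; rewrite coef_poly indep_logder0 mulr0 scale0r.
- move=> k /andP[_ kd]; rewrite coef_sum -psumE.
  by apply: eq_bigr => i _; rewrite coef_poly ltnS kd.
- move=> k /andP[_ kd]; rewrite coef_sum -psumE.
  by apply: eq_bigr => i _; rewrite coef_poly ltnS kd.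
Qed.

End GradedIndependence.

Lemma RHS_degE (T : finType) (e : rel T) n d : RHS_deg e n d =
  \sum_(W : {set T}) (-1) ^+ #|~: W| *: (\prod_(i < n) grade (H_at e W d i))`_d.
Proof.
rewrite /RHS_deg hcompE /grade (big_morph _ (mmapD _ _) (mmap0 _ _)) coef_sum.
apply: eq_bigr => W _.
by rewrite mmapZ (rmorph_prod (mmap _ _)) /= coefCM mul_mpolyC.
Qed.

Lemma prodr_nat_forall (T : finType) (A : pred T) (b : T -> bool) :
  \prod_(v in A) ((b v)%:R : rat) = ([forall v in A, b v])%:R.
Proof.
have [Ab|] := boolP [forall v in A, b v].
  by rewrite big1 // => v vA; rewrite (forall_inP Ab v vA).
by rewrite negb_forall_in => /exists_inP [v vA /negbTE bv]; rewrite (bigD1 v) //= bv mul0r.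
Qed.

Lemma sum_sign_subsets (T : finType) (c : T -> bool) :
  \sum_(W : {set T}) (-1) ^+ #|~: W| * ([forall v, (v \notin W) ==> c v])%:R
  = ([forall v, ~~ c v])%:R :> rat.
Proof.
pose g v (b : bool) : rat := if b then 1 else - (c v)%:R.
have termE W : (-1) ^+ #|~: W| * ([forall v, (v \notin W) ==> c v])%:R
               = \prod_v g v (v \in W).
  rewrite (bigID (mem W)) /= big1 => [|v ->] //; rewrite mul1r.
  rewrite (eq_bigr (fun v => - (c v)%:R)) => [|v /negbTE ->] //.
  rewrite (eq_bigl (fun v => v \in ~: W)); [|by move=> v; rewrite inE].
  rewrite prodrN prodr_nat_forall; congr (_ * (nat_of_bool _)%:R).
  by apply: eq_forallb => v; rewrite inE.
under eq_bigr do rewrite termE.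
rewrite (reindex (fun f : {ffun T -> bool} => [set v | f v])) /=; last first.
  exists (fun W : {set T} => [ffun v => v \in W]) => [f _|W _].
    by apply/ffunP => v; rewrite ffunE inE.
  by apply/setP => v; rewrite inE ffunE.
under eq_bigr do under eq_bigr do rewrite inE.
rewrite -(bigA_distr_bigA g) -[RHS](prodr_nat_forall predT).
by apply: eq_bigr => v _; rewrite big_bool /g; case: (c v); rewrite ?subrr ?subr0.
Qed.

Section ColorClasses.
Variables (T : finType) (e : rel T) (n : nat).
Local Notation MP := {mpoly rat[n]}.
Implicit Types (k : {ffun T -> {set 'I_n}}) (W : {set T}).

Definition color_classes k : {ffun 'I_n -> {set T}} := [ffun i => [set v | i \in k v]].

Definition coloring_size k := (\sum_v #|k v|)%N.
Definition coloring_monomial k : MP := \prod_v \prod_(i in k v) 'X_i.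
Definition disjoint_on_edges k := [forall u, forall v, e u v ==> [disjoint k u & k v]].
Definition colored_within W k := [forall v, (v \notin W) ==> (k v == set0)].

Lemma color_classes_bij : bijective color_classes.
Proof.
exists (fun F : {ffun 'I_n -> {set T}} => [ffun v => [set i | v \in F i]]) => F.
  by apply/ffunP => v; apply/setP => i; rewrite !ffunE !inE ffunE inE.
by apply/ffunP => i; apply/setP => v; rewrite !ffunE !inE ffunE inE.
Qed.

Lemma sum_card_color_classes k : (\sum_i #|color_classes k i|)%N = coloring_size k.
Proof.
transitivity (\sum_i \sum_v (i \in k v) : nat)%N.
  by apply: eq_bigr => i _; rewrite ffunE -sum1dep_card big_mkcond;
     apply: eq_bigr => v _; case: (i \in k v).
rewrite exchange_big; apply: eq_bigr => v _; rewrite -sum1_card [RHS]big_mkcond.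
by apply: eq_bigr => i _; case: (i \in k v).
Qed.

Lemma prod_color_classes k : \prod_i 'X_i ^+ #|color_classes k i| = coloring_monomial k.
Proof.
transitivity (\prod_i \prod_v (if i \in k v then 'X_i else 1 : MP)).
  apply: eq_bigr => i _; rewrite -big_mkcond /= ffunE -prodr_const.
  by apply: eq_bigl => v; rewrite inE.
by rewrite exchange_big; apply: eq_bigr => v _; rewrite [RHS]big_mkcond.
Qed.

Lemma color_classes_indep W k :
  (color_classes k \in ffun_on (fun S : {set T} => (S \subset W) && independent e S))
  = disjoint_on_edges k && colored_within W k.
Proof.
apply/ffun_onP/andP => [classes_ok|[k_disj k_within] i].
  split.
    apply/forallP => u; apply/forallP => v; apply/implyP => uv.
    rewrite -setI_eq0; apply/eqP/setP => i; rewrite !inE.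
    apply/negP => /andP[iu iv].
    have /andP[_ /forall_inP /(_ u)] := classes_ok i; rewrite ffunE inE => /(_ iu).
    by move/forall_inP => /(_ v); rewrite inE => /(_ iv); rewrite uv.
  apply/forallP => v; apply/implyP => vW; apply/eqP/setP => i; rewrite inE.
  apply/negP => iv; have /andP[/subsetP /(_ v) + _] := classes_ok i.
  by rewrite ffunE inE => /(_ iv); rewrite (negbTE vW).
apply/andP; split.
  apply/subsetP => v; rewrite ffunE inE => iv; apply/negPn/negP => vW.
  by move/forallP: k_within => /(_ v); rewrite vW /= => /eqP kv0; rewrite kv0 inE in iv.
apply/forall_inP => u; rewrite ffunE inE => iu; apply/forall_inP => v.
rewrite inE => iv; apply/negP => uv.
move/forallP: k_disj => /(_ u) /forallP /(_ v); rewrite uv /= => /disjointFr.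
by move=> /(_ i iu); rewrite iv.
Qed.

Lemma coef_prod_indep_poly_at W d : (\prod_(i < n) indep_poly_at e W i)`_d =
  \sum_(k | disjoint_on_edges k && colored_within W k && (coloring_size k == d))
    coloring_monomial k.
Proof.
rewrite /indep_poly_at bigA_distr_big coef_sum.
under eq_bigr do rewrite big_split /= -rmorph_prod prodrXr coefCM coefXn.
rewrite (reindex _ (onW_bij _ color_classes_bij)) /= big_mkcond [RHS]big_mkcond.
apply: eq_bigr => k _; rewrite color_classes_indep sum_card_color_classes.
rewrite prod_color_classes eq_sym.
by case: (_ && _); case: eqP; rewrite ?mulr1 ?mulr0.
Qed.

End ColorClasses.

(* Inclusion-exclusion over the vertices allowed to receive a nonempty set. *)
Lemma Xbar_degE (T : finType) (e : rel T) n d : Xbar_deg e n d =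
  \sum_(W : {set T}) (-1) ^+ #|~: W| *: (\prod_(i < n) indep_poly_at e W i)`_d.
Proof.
under [RHS]eq_bigr do rewrite coef_prod_indep_poly_at scaler_sumr big_mkcond.
rewrite /Xbar_deg big_mkcond exchange_big; apply: eq_bigr => k _.
rewrite /proper_set_coloring -/(disjoint_on_edges e k) -/(coloring_size k).
case: (disjoint_on_edges e k); case: (coloring_size k == d);
  rewrite ?andbF ?andbT /=; try by rewrite big1 // => W _; rewrite ?andbF.
rewrite (eq_bigr (fun W => ((-1) ^+ #|~: W| * (colored_within W k)%:R) *:
  coloring_monomial k)) => [|W _]; last first.
  by case: (colored_within W k); rewrite ?mulr1 ?mulr0 ?scale0r.
rewrite -scaler_suml (sum_sign_subsets (fun v => k v == set0)).
by case: [forall v, k v != set0]; rewrite ?scale1r ?scale0r.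
Qed.

Theorem mainTheorem7 (T : finType) (e : rel T) :
  simple_graph e ->
  forall n d : nat, (d <= n)%N ->
    omega_rel n d (Xbar_deg e n d) (RHS_deg e n d).
Proof.
move=> _ n d _; rewrite Xbar_degE RHS_degE; apply: omega_pair_rel.
by apply: omega_pair_sum => W _; apply/omega_pairZ/omega_pair_indep_H.
Qed.
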